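(* Fix $\theta=\pi/8$ and, for an angle $\alpha$, let $\phi_\alpha=\cos(\alpha)|0\rangle+\sin(\alpha)|1\rangle$. Define the single-qubit states $\phi_{0,0}=\phi_{-\theta}$, $\phi_{0,1}=\phi_{\theta}$, $\phi_{1,0}=\phi_{\pi/2-\theta}$, $\phi_{1,1}=\phi_{\pi/2+\theta}$. Consider the following two-party quantum protocol (the ''biased coin flipping protocol''): (1) Alice picks $b,x\in\{0,1\}$ uniformly at random and sends the qubit $\phi_{b,x}$ to Bob. (2) Bob picks $b'\in\{0,1\}$ uniformly at random and sends it to Alice. (3) Alice sends $b$ and $x$ to Bob. Bob checks them against the qubit received in step (1) by measuring it in the orthonormal basis $\{\phi_{0,x},\phi_{1,x}\}$ and verifying that the outcome is $\phi_{b,x}$. The result of the game is $err$ if the check fails (Alice is caught cheating) and $b\oplus b'$ otherwise. Then this protocol is a quantum coin flipping protocol with bias $\delta\le 0.42$.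
   Context: A quantum coin flipping protocol with bias $\delta$ is a quantum communication protocol between Alice and Bob at the end of which each decides on a value in $\{0,1,err\}$; let $c_A$ and $c_B$ denote Alice's and Bob's results. It is required that: (i) if both players are honest, then always $c_A=c_B$, $\Pr(c_A=err)=0$ and $\Pr(c_A=0)=\Pr(c_A=1)=1/2$; (ii) if one player is honest and the other follows an arbitrary (all-powerful quantum) strategy, then the honest player's result $c$ satisfies $\Pr(c=b)\le \tfrac12+\delta$ for every $b\in\{0,1\}$. Classical bits sent as qubits are measured by the receiver in the computational basis $\{|0\rangle,|1\rangle\}$. *)

From HB Require Import structures.
From mathcomp Require Import all_boot all_order all_algebra.
From mathcomp Require Import reals trigo.
From mathcomp Require Import complex mxtens.

Set Implicit Arguments.
Unset Strict Implicit.
Unset Printing Implicit Defensive.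

Import Order.TTheory GRing.Theory Num.Theory.
Local Open Scope ring_scope.
Local Open Scope complex_scope.

Section CoinFlip.
Variable R : realType.
Local Notation C := R[i].

Definition adjmx {m n} (A : 'M[C]_(m, n)) : 'M[C]_(n, m) := (map_mx conjc A)^T.

Definition psd {n} (A : 'M[C]_n) : Prop :=
  forall v : 'cV[C]_n, 0 <= (adjmx v *m A *m v) 0 0.

Definition density {n} (rho : 'M[C]_n) : Prop := psd rho /\ \tr rho = 1.

Definition povm {I : finType} {n} (E : I -> 'M[C]_n) : Prop :=
  (forall i, psd (E i)) /\ \sum_(i : I) E i = 1%:M.

Definition ketbra (v : 'cV[C]_2) : 'M[C]_2 := v *m adjmx v.

Definition theta : R := pi / 8.

Definition phi (a : R) : 'cV[C]_2 :=
  \col_(i < 2) (if i == ord0 then (cos a)%:C else (sin a)%:C).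

Definition angle (b x : bool) : R :=
  match b, x with
  | false, false => - theta
  | false, true => theta
  | true, false => pi / 2 - theta
  | true, true => pi / 2 + theta
  end.

Definition phibx (b x : bool) : 'cV[C]_2 := phi (angle b x).

(* projector onto phi_{b,x}: Bob's measurement in the basis
   {phi_{0,x}, phi_{1,x}} has outcome phi_{o,x} with operator Pbx o x *)
Definition Pbx (o x : bool) : 'M[C]_2 := ketbra (phibx o x).

(* Bob's result when Alice announced (b,x), Bob sent b', and Bob's
   measurement outcome was phi_{o,x}.  None stands for err. *)
Definition bob_result (b x b' o : bool) : option bool :=
  if o == b then Some (b (+) b') else None.

Definition honest_prob (ca cb : option bool) : C :=
  \sum_(b : bool) \sum_(x : bool) \sum_(b' : bool) \sum_(o : bool)
     (1 / 8) * \tr (Pbx o x *m Pbx b x)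
     * ((ca == Some (b (+) b')) && (cb == bob_result b x b' o))%:R.

Definition honest_probA (ca : option bool) : C :=
  \sum_(cb : option bool) honest_prob ca cb.

(* ---- cheating Alice (arbitrary quantum strategy) vs honest Bob ----
   Alice prepares a state rho on (qubit sent to Bob) (x) (her private
   register C^d); on receiving b' she performs a POVM M b' on her register
   whose outcome (b,x) is what Bob reads from her step-(3) message. *)
Definition cheatA_strategy (d : nat) (rho : 'M[C]_(2 * d))
  (M : bool -> bool * bool -> 'M[C]_d) : Prop :=
  density rho /\ forall b', povm (M b').

Definition cheatA_probB (d : nat) (rho : 'M[C]_(2 * d))
  (M : bool -> bool * bool -> 'M[C]_d) (c : option bool) : C :=
  \sum_(b' : bool) \sum_(b : bool) \sum_(x : bool) \sum_(o : bool)
     (1 / 2) * \tr ((Pbx o x *t M b' (b, x)) *m rho)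
     * (c == bob_result b x b' o)%:R.

(* ---- cheating Bob (arbitrary quantum strategy) vs honest Alice ----
   Bob holds an ancilla C^d in a state sigma of his choice; on receiving
   phi_{b,x} he performs a POVM E on (qubit) (x) (ancilla) whose outcome is
   the bit b' he sends. *)
Definition cheatB_strategy (d : nat) (sigma : 'M[C]_d)
  (E : bool -> 'M[C]_(2 * d)) : Prop :=
  density sigma /\ povm E.

Definition cheatB_probA (d : nat) (sigma : 'M[C]_d)
  (E : bool -> 'M[C]_(2 * d)) (c : option bool) : C :=
  \sum_(b : bool) \sum_(x : bool) \sum_(b' : bool)
     (1 / 4) * \tr (E b' *m (Pbx b x *t sigma))
     * (c == Some (b (+) b'))%:R.

Definition coin_flipping_with_bias (delta : R) : Prop :=
  [/\ (forall ca cb : option bool, ca <> cb -> honest_prob ca cb = 0),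
      honest_probA None = 0,
      honest_probA (Some false) = 1 / 2 &
      honest_probA (Some true) = 1 / 2]
  /\
  (forall (d : nat) (rho : 'M[C]_(2 * d)) (M : bool -> bool * bool -> 'M[C]_d),
      cheatA_strategy rho M ->
      forall b : bool, cheatA_probB rho M (Some b) <= (1 / 2 + delta)%:C)
  /\
  (forall (d : nat) (sigma : 'M[C]_d) (E : bool -> 'M[C]_(2 * d)),
      cheatB_strategy sigma E ->
      forall b : bool, cheatB_probA sigma E (Some b) <= (1 / 2 + delta)%:C).

End CoinFlip.

(* For the honest run, Tr (P_{o,x} P_{b,x}) = cos^2 of the angle between phi_{o,x}
   and phi_{b,x}, i.e. [o = b], since phi_{1,x} is phi_{0,x} rotated by pi/2.

   Each cheating probability is a sum of terms Tr (X (A (x) Y)) with X, Y positive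
   semidefinite, and A |-> Tr (X (A (x) Y)) is monotone for the Loewner order (by the
   spectral theorem), so everything reduces to 2x2 matrix inequalities.  Write
   P_{b,x} for the projector onto phi_{b,x} and let c be the value the cheater aims for.
   A cheating Bob wins with probability
     (1/4) sum_{b'} Tr (E_{b'} ((P_{c+b',0} + P_{c+b',1}) (x) sigma)),
   and P_{b,0} + P_{b,1} is diagonal with entries 2 cos^2 theta, 2 sin^2 theta, hence
   at most (1 + 2 delta) I.  A cheating Alice wins with probability
     (1/2) sum_{b',x} Tr ((P_{c+b',x} (x) M_{b'}(c+b',x)) rho);
   every P_{b,x} is at most the x-independent G_b = diag(P_{b,x}) + delta I, because
   G_b - P_{b,x} has diagonal delta and off-diagonal -+ cos theta sin theta, whose
   square is 1/8 <= delta^2.  Summing out Alice's POVM and using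
   G_0 + G_1 = (1 + 2 delta) I then bounds her probability by 1/2 + delta. *)

From HB Require Import structures.
From mathcomp Require Import all_boot all_order all_algebra.
From mathcomp Require Import reals trigo.
From mathcomp Require Import complex mxtens spectral.
From mathcomp Require Import ring lra.
Import Order.TTheory GRing.Theory Num.Theory Num.Def.
Set Implicit Arguments.
Unset Strict Implicit.
Unset Printing Implicit Defensive.
Local Open Scope ring_scope.
Local Open Scope complex_scope.

Section TensorProduct.
Variable K : pzRingType.

Lemma tensmxDl m n p q (A B : 'M[K]_(m, n)) (M : 'M[K]_(p, q)) :
  (A + B) *t M = A *t M + B *t M.
Proof. by apply/matrixP => i j; rewrite !mxE mulrDl. Qed.

Lemma tensmxNl m n p q (A : 'M[K]_(m, n)) (M : 'M[K]_(p, q)) :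
  (- A) *t M = - (A *t M).
Proof. by apply/matrixP => i j; rewrite !mxE mulNr. Qed.

Lemma tensmxBl m n p q (A B : 'M[K]_(m, n)) (M : 'M[K]_(p, q)) :
  (A - B) *t M = A *t M - B *t M.
Proof. by rewrite tensmxDl tensmxNl. Qed.

Lemma tensmx_sumr m n p q (I : finType) (A : 'M[K]_(m, n)) (B : I -> 'M[K]_(p, q)) :
  A *t (\sum_i B i) = \sum_i A *t B i.
Proof.
apply/matrixP => i j; rewrite !summxE !mxE summxE mulr_sumr.
by apply: eq_bigr => k _; rewrite !mxE.
Qed.

Lemma mxtens_index_eq m n (ij kl : 'I_m * 'I_n) :
  (mxtens_index ij == mxtens_index kl) = (ij == kl).
Proof. exact/inj_eq/can_inj/mxtens_indexK. Qed.

Lemma tensmx_rowE m n (d : 'rV[K]_m) (e : 'rV[K]_n) i j :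
  (d *t e) 0 (mxtens_index (i, j)) = d 0 i * e 0 j.
Proof.
by rewrite mxE mxtens_indexK /=; congr (d _ _ * e _ _); apply: ord1.
Qed.

Lemma diag_mx_tens m n (d : 'rV[K]_m) (e : 'rV[K]_n) :
  diag_mx d *t diag_mx e = diag_mx (d *t e).
Proof.
apply/matrixP => k l.
case: (mxtens_indexP k) => i j; case: (mxtens_indexP l) => i' j'.
rewrite tensmxE [RHS]mxE tensmx_rowE !mxE mxtens_index_eq xpair_eqE.
by case: (i == i'); case: (j == j'); rewrite ?mulr0n ?mulr0 ?mul0r ?mulr1n.
Qed.

Lemma scalar_mx_tens m n (a b : K) : (a%:M : 'M_m) *t (b%:M : 'M_n) = (a * b)%:M.
Proof.
rewrite -!diag_const_mx diag_mx_tens; congr diag_mx.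
by apply/matrixP => i j; rewrite !mxE.
Qed.

Lemma mxtrace_tens m n (A : 'M[K]_m) (B : 'M[K]_n) : \tr (A *t B) = \tr A * \tr B.
Proof.
rewrite /mxtrace mulr_suml [RHS](eq_bigr _ (fun i _ => mulr_sumr _ _ _ _)) pair_bigA.
rewrite (reindex (@mxtens_index m n)) /=; last first.
  by exists (@mxtens_unindex m n) => k _; rewrite ?mxtens_indexK ?mxtens_unindexK.
by apply: eq_bigr => -[i j] _; rewrite tensmxE.
Qed.

End TensorProduct.

Section PositiveSemidefinite.
Variable R : realType.
Local Notation C := R[i].

Lemma adjmxE m n (A : 'M[C]_(m, n)) : adjmx A = (A ^t conjC)%sesqui.
Proof. by apply/matrixP => i j; rewrite !mxE. Qed.

Lemma adjmxK m n (A : 'M[C]_(m, n)) : adjmx (adjmx A) = A.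
Proof. by apply/matrixP => i j; rewrite !mxE conjcK. Qed.

Lemma adjmxM m n p (A : 'M[C]_(m, n)) (B : 'M[C]_(n, p)) :
  adjmx (A *m B) = adjmx B *m adjmx A.
Proof. by rewrite /adjmx map_mxM trmx_mul. Qed.

Lemma adjmxD m n (A B : 'M[C]_(m, n)) : adjmx (A + B) = adjmx A + adjmx B.
Proof. by apply/matrixP => i j; rewrite !mxE rmorphD. Qed.

Lemma adjmxZ m n (c : C) (A : 'M[C]_(m, n)) :
  adjmx (c *: A) = conjc c *: adjmx A.
Proof. by apply/matrixP => i j; rewrite !mxE rmorphM. Qed.

Lemma adjmx_tens m n p q (A : 'M[C]_(m, n)) (B : 'M[C]_(p, q)) :
  adjmx (A *t B) = adjmx A *t adjmx B.
Proof. by rewrite /adjmx map_mxT trmx_tens. Qed.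

Lemma adjmx_delta n (i : 'I_n) : adjmx (delta_mx i 0 : 'cV[C]_n) = delta_mx 0 i.
Proof. by apply/matrixP => a b; rewrite !mxE conjc_nat andbC. Qed.

Definition sesqui_form n (A : 'M[C]_n) (u v : 'cV[C]_n) : C :=
  (adjmx u *m A *m v) 0 0.

Lemma sesqui_form_delta n (A : 'M[C]_n) i j :
  sesqui_form A (delta_mx i 0) (delta_mx j 0) = A i j.
Proof. by rewrite /sesqui_form adjmx_delta -rowE -colE !mxE. Qed.

Lemma sesqui_formDZ n (A : 'M[C]_n) u w (c : C) :
  sesqui_form A (u + c *: w) (u + c *: w) =
    sesqui_form A u u + c * sesqui_form A u w + conjc c * sesqui_form A w u
    + conjc c * c * sesqui_form A w w.
Proof.
rewrite /sesqui_form adjmxD adjmxZ !mulmxDl !mulmxDr -!scalemxAl -!scalemxAr.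
by rewrite !mxE !addrA mulrA.
Qed.

(* Polarization: the form takes real values at e_i + e_j and at e_i + 'i e_j. *)
Lemma psd_hermitian n (A : 'M[C]_n) i j : psd A -> A j i = conjc (A i j).
Proof.
move=> psdA.
have := psdA (delta_mx i 0 + 1 *: delta_mx j 0).
have := psdA (delta_mx i 0 + 'i *: delta_mx j 0).
have := psdA (delta_mx i 0); have := psdA (delta_mx j 0).
rewrite -!/(sesqui_form _ _ _) !sesqui_formDZ !sesqui_form_delta.
move=> /ger0_Im + /ger0_Im + /ger0_Im + /ger0_Im.
case: (A i i) (A j j) (A i j) (A j i) => [a1 b1] [a2 b2] [a3 b3] [a4 b4] /=.
move=> -> -> h1 h2; apply/eqP; rewrite eq_complex /=.
by apply/andP; split; apply/eqP; lra.
Qed.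

Lemma psd_adjmx n (A : 'M[C]_n) : psd A -> adjmx A = A.
Proof.
by move=> psdA; apply/matrixP => i j; rewrite !mxE (psd_hermitian i j psdA) conjcK.
Qed.

Lemma psd_conjmx n m (M : 'M[C]_(m, n)) (F : 'M[C]_m) :
  psd F -> psd (adjmx M *m F *m M).
Proof. by move=> psdF v; have := psdF (M *m v); rewrite adjmxM !mulmxA. Qed.

Lemma psd_conjmx_diag_ge0 m n (P : 'M[C]_(m, n)) (X : 'M[C]_n) i :
  psd X -> 0 <= (P *m X *m adjmx P) i i.
Proof.
move=> psdX; have := psd_conjmx (adjmx P) psdX (delta_mx i 0).
by rewrite adjmxK adjmx_delta -rowE -colE !mxE.
Qed.

Lemma psd_normalmx n (A : 'M[C]_n) : psd A -> A \is normalmx.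
Proof. by move=> psdA; apply/normalmxP; rewrite -adjmxE psd_adjmx. Qed.

Lemma psd_diag_mx n (d : 'rV[C]_n) : (forall i, 0 <= d 0 i) -> psd (diag_mx d).
Proof.
move=> d_ge0 v; rewrite mul_mx_diag !mxE; apply: sumr_ge0 => k _; rewrite !mxE.
by rewrite mulrAC mulrC mulr_ge0 // mulrC mulcJ_ge0.
Qed.

Lemma psd_spectral n (A : 'M[C]_n) : psd A ->
  exists (P : 'M[C]_n) (d : 'rV[C]_n),
    A = adjmx P *m diag_mx d *m P /\ forall i, 0 <= d 0 i.
Proof.
move=> psdA; have /orthomx_spectralP defA := psd_normalmx psdA.
set P := spectralmx A in defA *; set d := spectral_diag A in defA *.
have invP : invmx P = adjmx P by rewrite adjmxE invmx_unitary ?spectral_unitarymx.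
have PPadj : P *m adjmx P = 1%:M by rewrite -invP mulmxV ?spectral_unit.
exists P, d; split=> [|i]; first by rewrite -invP.
have -> : d 0 i = (P *m A *m adjmx P) i i.
  by rewrite defA invP !mulmxA PPadj mul1mx -mulmxA PPadj mulmx1 mxE eqxx mulr1n.
exact: psd_conjmx_diag_ge0.
Qed.

Lemma mxtrace_mul_psd_ge0 n (X Y : 'M[C]_n) : psd X -> psd Y -> 0 <= \tr (X *m Y).
Proof.
move=> psdX /psd_spectral [P [d [-> d_ge0]]].
rewrite !mulmxA mxtrace_mulC !mulmxA mul_mx_diag /mxtrace.
by apply: sumr_ge0 => i _; rewrite mxE mulr_ge0 // psd_conjmx_diag_ge0.
Qed.

Lemma psd_tensmx m n (A : 'M[C]_m) (B : 'M[C]_n) : psd A -> psd B -> psd (A *t B).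
Proof.
move=> /psd_spectral [P [d [-> d_ge0]]] /psd_spectral [Q [e [-> e_ge0]]].
rewrite -!tensmx_mul -adjmx_tens diag_mx_tens; apply/psd_conjmx/psd_diag_mx => k.
by case: (mxtens_indexP k) => i j; rewrite tensmx_rowE mulr_ge0.
Qed.

Lemma ler_mxtrace_tens m n (X : 'M[C]_(m * n)) (A B : 'M[C]_m) (Y : 'M[C]_n) :
  psd X -> psd Y -> psd (B - A) -> \tr (X *m (A *t Y)) <= \tr (X *m (B *t Y)).
Proof.
move=> psdX psdY psdBA; rewrite -subr_ge0 -raddfB /= -mulmxBr -tensmxBl.
exact/mxtrace_mul_psd_ge0/psd_tensmx.
Qed.

End PositiveSemidefinite.

Section RealSymmetric2.
Variable R : realType.
Local Notation C := R[i].

Definition symmx2 (p q r : R) : 'M[C]_2 :=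
  \matrix_(i, j) (if i == j then (if i == 0 then p else r) else q)%:C.

Lemma quad_form_ge0 (p q r x y : R) : 0 <= p -> 0 <= r -> q ^+ 2 <= p * r ->
  0 <= p * x ^+ 2 + q * x * y *+ 2 + r * y ^+ 2.
Proof.
move=> p_ge0 r_ge0 qpr; set F := _ + _ + _.
have sumF : (p + r) * F = (p * x + q * y) ^+ 2 + (r * y + q * x) ^+ 2
                          + (p * r - q ^+ 2) * (x ^+ 2 + y ^+ 2) by rewrite /F; ring.
have [pr0|pr_gt0] := eqVneq (p + r) 0.
  have [p0 r0] : p = 0 /\ r = 0 by lra.
  have q0 : q = 0 by nra.
  by rewrite /F p0 q0 r0 !mul0r mul0rn !addr0.
have : 0 <= (p + r) * F.
  rewrite sumF addr_ge0 ?mulr_ge0 ?subr_ge0 //.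
  - by rewrite addr_ge0 ?sqr_ge0.
  - by rewrite addr_ge0 ?sqr_ge0.
by rewrite pmulr_rge0 // lt_neqAle eq_sym pr_gt0 addr_ge0.
Qed.

Lemma psd_symmx2 (p q r : R) : 0 <= p -> 0 <= r -> q ^+ 2 <= p * r -> psd (symmx2 p q r).
Proof.
move=> p_ge0 r_ge0 qpr v.
rewrite !mxE !big_ord_recl !big_ord0 !mxE !big_ord_recl !big_ord0 !mxE /=.
case: (v 0 0) (v (lift ord0 ord0) 0) => [a b] [c d].
rewrite lecE /=; apply/andP; split; first by apply/eqP; ring.
have := quad_form_ge0 a c p_ge0 r_ge0 qpr; have := quad_form_ge0 b d p_ge0 r_ge0 qpr.
nra.
Qed.

Lemma mxtrace_symmx2_mul p q r p' q' r' :
  \tr (symmx2 p q r *m symmx2 p' q' r') = (p * p' + q * q' *+ 2 + r * r')%:C.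
Proof.
rewrite /mxtrace !big_ord_recl !big_ord0 !mxE !big_ord_recl !big_ord0 !mxE /=.
by rewrite -!rmorphM -!rmorphD; congr (_%:C); ring.
Qed.

Lemma symmx2D p q r p' q' r' :
  symmx2 p q r + symmx2 p' q' r' = symmx2 (p + p') (q + q') (r + r').
Proof.
by apply/matrixP => i j; rewrite !mxE; case: (i == j); case: (i == 0); rewrite -rmorphD.
Qed.

Lemma symmx2N p q r : - symmx2 p q r = symmx2 (- p) (- q) (- r).
Proof.
by apply/matrixP => i j; rewrite !mxE; case: (i == j); case: (i == 0); rewrite -rmorphN.
Qed.

Lemma symmx2_scalar t : symmx2 t 0 t = t%:C%:M.
Proof.
by apply/matrixP => i j; rewrite !mxE if_same; case: (i == j); rewrite ?mulr1n.
Qed.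

End RealSymmetric2.

Section Protocol.
Variable R : realType.
Local Notation C := R[i].
Local Notation Pbx := (Pbx R).
Local Notation angle := (angle R).

Definition cT : R := cos (theta R).
Definition sT : R := sin (theta R).

Lemma ketbra_phi (a : R) :
  ketbra (phi a) = symmx2 (cos a ^+ 2) (cos a * sin a) (sin a ^+ 2).
Proof.
apply/matrixP => i j; rewrite !mxE big_ord1 !mxE.
case: i => -[|[|//]] ?; case: j => -[|[|//]] ? /=;
  by apply/eqP; rewrite eq_complex /=; apply/andP; split; apply/eqP; ring.
Qed.

Lemma mxtrace_ketbra_phi (a b : R) :
  \tr (ketbra (phi a) *m ketbra (phi b)) = (cos (a - b) ^+ 2)%:C.
Proof. by rewrite !ketbra_phi mxtrace_symmx2_mul cosB; congr (_%:C); ring. Qed.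

Lemma angle_pihalf x : angle true x = angle false x + pi / 2.
Proof. by case: x; rewrite /angle addrC. Qed.

Lemma mxtrace_Pbx o b x : \tr (Pbx o x *m Pbx b x) = (o == b)%:R.
Proof.
rewrite mxtrace_ketbra_phi.
case: o; case: b; rewrite ?subrr ?cos0 ?expr1n // angle_pihalf.
  by rewrite addrAC subrr add0r cos_pihalf expr0n.
by rewrite opprD addrA subrr add0r cosN cos_pihalf expr0n.
Qed.

Lemma honest_probE ca cb :
  honest_prob R ca cb = ((ca == cb) && (ca != None))%:R / 2 :> C.
Proof.
transitivity (\sum_(b : bool) \sum_(x : bool) \sum_(b' : bool)
    (1 / 8 : C) * ((ca == Some (b (+) b')) && (cb == Some (b (+) b')))%:R).
  apply: eq_bigr => b _; apply: eq_bigr => x _; apply: eq_bigr => b' _.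
  rewrite big_bool /= !mxtrace_Pbx /bob_result.
  by case: b; rewrite /= ?eqxx ?mulr1 ?mulr0 ?mul0r ?addr0 ?add0r.
rewrite !big_bool /=.
by case: ca => [[]|]; case: cb => [[]|]; rewrite /=; field.
Qed.

Lemma honest_run :
  [/\ (forall ca cb : option bool, ca <> cb -> honest_prob R ca cb = 0),
      honest_probA R None = 0,
      honest_probA R (Some false) = 1 / 2 &
      honest_probA R (Some true) = 1 / 2].
Proof.
have probA c : honest_probA R (Some c) = 1 / 2.
  rewrite /honest_probA (bigD1 (Some c)) //= big1 => [|cb /negbTE cbNc].
    by rewrite honest_probE eqxx mul1r addr0.
  by rewrite honest_probE eq_sym cbNc mul0r.
split; [move=> ca cb /eqP/negbTE caNcb | | exact: probA | exact: probA].
  by rewrite honest_probE caNcb mul0r.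
by apply: big1 => cb _; rewrite honest_probE andbF mul0r.
Qed.

Lemma cos_piquarter_sqr : cos (pi / 4 : R) ^+ 2 = 1 / 2.
Proof.
have := cos_mulr2n (pi / 4 : R).
have -> : (pi / 4 : R) *+ 2 = pi / 2 by rewrite mulr2n; field.
by rewrite cos_pihalf mulr2n => /eqP; rewrite eq_sym subr_eq0 => /eqP h; lra.
Qed.

Lemma cT_sqr : cT ^+ 2 = (1 + cos (pi / 4)) / 2.
Proof.
have := cos_mulr2n (theta R).
have -> : theta R *+ 2 = pi / 4 by rewrite /theta mulr2n; field.
by rewrite -/cT mulr2n => ->; field.
Qed.

Lemma sT_sqr : sT ^+ 2 = (1 - cos (pi / 4)) / 2.
Proof. by rewrite /sT sin2cos2 -/cT cT_sqr; field. Qed.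

Lemma cT_sT_sqr : (cT * sT) ^+ 2 = 1 / 8.
Proof. by rewrite exprMn cT_sqr sT_sqr; have := cos_piquarter_sqr; nra. Qed.

Lemma cos_angle b x :
  cos (angle b x) =
  match b, x with false, _ => cT | true, false => sT | true, true => - sT end.
Proof.
case: b; case: x; rewrite /angle /cT /sT ?cosN //.
  by rewrite addrC cosDpihalf.
by rewrite cosB cos_pihalf sin_pihalf mul0r mul1r add0r.
Qed.

Lemma sin_angle b x :
  sin (angle b x) =
  match b, x with false, false => - sT | false, true => sT | true, _ => cT end.
Proof.
case: b; case: x; rewrite /angle /cT /sT ?sinN //.
  by rewrite addrC sinDpihalf.
by rewrite sinB cos_pihalf sin_pihalf mul0r mul1r subr0.
Qed.

Lemma Pbx_symmx2 b x :
  Pbx b x = symmx2 ((if b then sT else cT) ^+ 2)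
    (cos (angle b x) * sin (angle b x)) ((if b then cT else sT) ^+ 2).
Proof.
rewrite /Pbx /phibx ketbra_phi.
by rewrite cos_angle sin_angle; case: b; case: x; rewrite ?sqrrN.
Qed.

Lemma cos_sin_angle_sqr b x :
  (cos (angle b x) * sin (angle b x)) ^+ 2 = (cT * sT) ^+ 2.
Proof. by rewrite cos_angle sin_angle; case: b; case: x; rewrite /=; ring. Qed.

Lemma cos_sin_angle_flip b :
  cos (angle b true) * sin (angle b true) = - (cos (angle b false) * sin (angle b false)).
Proof. by rewrite !cos_angle !sin_angle; case: b; ring. Qed.

Definition alice_dominant (u : R) (b : bool) : 'M[C]_2 :=
  symmx2 ((if b then sT else cT) ^+ 2 + u) 0 ((if b then cT else sT) ^+ 2 + u).

Lemma psd_alice_dominant u b : 0 <= u -> psd (alice_dominant u b).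
Proof.
by move=> u_ge0; apply: psd_symmx2; rewrite ?expr0n ?mulr_ge0 ?addr_ge0 ?sqr_ge0.
Qed.

Lemma psd_alice_dominantB u b x : 0 <= u -> (cT * sT) ^+ 2 <= u ^+ 2 ->
  psd (alice_dominant u b - Pbx b x).
Proof.
move=> u_ge0 csu; rewrite Pbx_symmx2 symmx2N symmx2D !(addrC _ u) !addrK sub0r.
by apply: psd_symmx2; rewrite // sqrrN cos_sin_angle_sqr -expr2.
Qed.

Lemma alice_dominant_sum u :
  alice_dominant u false + alice_dominant u true = (1 + 2 * u)%:C%:M.
Proof.
have := cos2Dsin2 (theta R); rewrite -/cT -/sT => cs1.
by rewrite symmx2D addr0 -symmx2_scalar; congr symmx2; lra.
Qed.

Lemma sum_bob_result (t : bool -> C) b x b' c :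
  \sum_(o : bool) t o * (Some c == bob_result b x b' o)%:R = (b == c (+) b')%:R * t b.
Proof.
rewrite (bigD1 b) //= big1 => [|o /negbTE oNb]; last by rewrite /bob_result oNb mulr0.
rewrite /bob_result eqxx addr0 mulrC; congr (_%:R * _).
by case: b; case: b'; case: c.
Qed.

Lemma cheatA_probB_SomeE d (rho : 'M[C]_(2 * d)) M c :
  cheatA_probB rho M (Some c) =
  \sum_(b' : bool) \sum_(b : bool) \sum_(x : bool)
    (b == c (+) b')%:R * (1 / 2 * \tr ((Pbx b x *t M b' (b, x)) *m rho)).
Proof.
apply: eq_bigr => b' _; apply: eq_bigr => b _; apply: eq_bigr => x _.
exact: (sum_bob_result (fun o => 1 / 2 * \tr ((Pbx o x *t M b' (b, x)) *m rho))).
Qed.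

Lemma cheatA_probB_le (u : R) d (rho : 'M[C]_(2 * d)) M c :
  0 <= u -> (cT * sT) ^+ 2 <= u ^+ 2 -> cheatA_strategy rho M ->
  cheatA_probB rho M (Some c) <= (1 / 2 + u)%:C.
Proof.
move=> u_ge0 csu [[psd_rho tr_rho] povmM].
pose G := alice_dominant u.
have dominated b' b x : (b == c (+) b')%:R * \tr ((Pbx b x *t M b' (b, x)) *m rho)
                        <= \tr ((G (c (+) b') *t M b' (b, x)) *m rho).
  have psdM := (povmM b').1 (b, x).
  rewrite ![\tr (_ *m rho)]mxtrace_mulC; case: eqP => [bE|_] /=.
    rewrite mul1r; apply: ler_mxtrace_tens => //.
    by rewrite bE; exact: psd_alice_dominantB.
  by rewrite mul0r; apply/mxtrace_mul_psd_ge0/psd_tensmx => //; exact: psd_alice_dominant.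
have povm_sum b' A : \sum_(b : bool) \sum_(x : bool) \tr ((A *t M b' (b, x)) *m rho)
                     = \tr ((A *t 1%:M) *m rho).
  rewrite -(povmM b').2 tensmx_sumr mulmx_suml raddf_sum pair_bigA.
  by apply: eq_bigr => -[].
rewrite cheatA_probB_SomeE.
apply: (@le_trans _ _ (\sum_(b' : bool) 1 / 2 * \tr ((G (c (+) b') *t 1%:M) *m rho))).
  apply: ler_sum => b' _; rewrite -(povm_sum b') mulr_sumr; apply: ler_sum => b _.
  rewrite mulr_sumr; apply: ler_sum => x _.
  by rewrite mulrCA ler_pM2l ?dominated // divr_gt0 ?ltr01 ?ltr0n.
rewrite big_bool /= -mulrDr -mxtraceD -mulmxDl -tensmxDl.
have -> : G (c (+) true) + G (c (+) false) = G false + G true.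
  by case: (c); rewrite // addrC.
rewrite alice_dominant_sum scalar_mx_tens mulr1 mul_scalar_mx mxtraceZ tr_rho mulr1.
suff -> : (1 / 2 : C) * (1 + 2 * u)%:C = (1 / 2 + u)%:C by [].
by rewrite rmorphD rmorphM /= rmorph1 rmorph_nat; field.
Qed.

Lemma Pbx_pair_sum b :
  Pbx b true + Pbx b false =
  symmx2 ((if b then sT else cT) ^+ 2 *+ 2) 0 ((if b then cT else sT) ^+ 2 *+ 2).
Proof. by rewrite !Pbx_symmx2 symmx2D cos_sin_angle_flip addNr -!mulr2n. Qed.

Lemma psd_scalarB_Pbx_pair (u : R) b : cT ^+ 2 <= 1 / 2 + u -> sT ^+ 2 <= 1 / 2 + u ->
  psd ((1 + 2 * u)%:C%:M - (Pbx b true + Pbx b false)).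
Proof.
move=> cu su; rewrite Pbx_pair_sum -symmx2_scalar symmx2N symmx2D subr0.
by apply: psd_symmx2; rewrite ?expr0n ?mulr_ge0 // subr_ge0 mulr2n; case: b; lra.
Qed.

Lemma sum_xor_indicator (t : bool -> C) c b' :
  \sum_(b : bool) t b * (Some c == Some (b (+) b'))%:R = t (c (+) b').
Proof.
rewrite (bigD1 (c (+) b')) //= addbK eqxx mulr1 big1 ?addr0 // => b bNc.
suff /negbTE -> : Some c != Some (b (+) b') by rewrite mulr0.
by apply: contra bNc => /eqP [->]; rewrite addbK.
Qed.

Lemma cheatB_probA_SomeE d (sigma : 'M[C]_d) E c :
  cheatB_probA sigma E (Some c) =
  \sum_(b' : bool) 1 / 4 *
    \tr (E b' *m ((Pbx (c (+) b') true + Pbx (c (+) b') false) *t sigma)).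
Proof.
rewrite /cheatB_probA; under eq_bigr => b _ do rewrite exchange_big.
rewrite exchange_big; apply: eq_bigr => b' _ /=.
under eq_bigr => b _ do rewrite -mulr_suml.
rewrite (sum_xor_indicator (fun b => \sum_x 1 / 4 * \tr (E b' *m (Pbx b x *t sigma)))).
by rewrite big_bool /= -mulrDr -mxtraceD -mulmxDr -tensmxDl.
Qed.

Lemma cheatB_probA_le (u : R) d (sigma : 'M[C]_d) E c :
  cT ^+ 2 <= 1 / 2 + u -> sT ^+ 2 <= 1 / 2 + u -> cheatB_strategy sigma E ->
  cheatB_probA sigma E (Some c) <= (1 / 2 + u)%:C.
Proof.
move=> cu su [[psd_sigma tr_sigma] [psdE sumE]].
rewrite cheatB_probA_SomeE.
apply: (@le_trans _ _
  (\sum_(b' : bool) 1 / 4 * \tr (E b' *m ((1 + 2 * u)%:C%:M *t sigma)))).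
  apply: ler_sum => b' _; rewrite ler_pM2l ?divr_gt0 ?ltr01 ?ltr0n //.
  by apply: ler_mxtrace_tens => //; exact: psd_scalarB_Pbx_pair.
rewrite big_bool in sumE.
rewrite big_bool /= -mulrDr -mxtraceD -mulmxDl sumE mul1mx.
rewrite mxtrace_tens mxtrace_scalar tr_sigma.
suff -> : (1 / 4 : C) * ((1 + 2 * u)%:C *+ 2 * 1) = (1 / 2 + u)%:C by [].
by rewrite rmorphD rmorphM /= rmorph1 rmorph_nat; field.
Qed.
End Protocol.

Theorem theorem2 (R : realType) :
  exists delta : R, delta <= 42 / 100 /\ coin_flipping_with_bias delta.
Proof.
have k2 := @cos_piquarter_sqr R.
exists (42 / 100); split=> //; split; first exact: honest_run.
split=> [d rho M strategy b | d sigma E strategy b].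
- by apply: cheatA_probB_le strategy; rewrite ?cT_sT_sqr; lra.
- by apply: cheatB_probA_le strategy; rewrite ?cT_sqr ?sT_sqr; nra.
Qed.
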